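(* Let $\lambda_1\ge\dots\ge\lambda_r>0>\lambda_{r+1}\ge\dots\ge\lambda_n$, $\Lambda_X=\operatorname{diag}(\lambda_1,\dots,\lambda_r)$, $\Lambda_S=\operatorname{diag}(\lambda_{r+1},\dots,\lambda_n)$, $d=\sqrt{\min\{r,n-r\}}$. Let $H_X\in\mathbb S^r$, $H_S\in\mathbb S^{n-r}$, $H_O\in\mathbb R^{(n-r)\times r}$ satisfy $\|H_X\|_2+\|H_S\|_2\le\frac{\lambda_r-\lambda_{r+1}}{2nd}$, and let $W_O^{(0)}$ be the solution of $W_O(\Lambda_X+H_X)-(\Lambda_S+H_S)W_O=H_O$. Then $$\|W_O^{(0)}-\Theta_0\circ H_O\|_2\le\frac{2nd}{(\lambda_r-\lambda_{r+1})^2}\|H_O\|_2(\|H_X\|_2+\|H_S\|_2),$$ where $\Theta_0\in\mathbb R^{(n-r)\times r}$ has entries $(\Theta_0)_{ij}=\frac{1}{\lambda_j-\lambda_{r+i}}$.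
   Context: $\mathbb S^p$ denotes real symmetric $p\times p$ matrices; $\|\cdot\|_2$ is the spectral norm; $\circ$ is the Hadamard product. *)

From HB Require Import structures.
From mathcomp Require Import all_boot all_order all_algebra.
From mathcomp Require Import all_classical all_reals.
Set Implicit Arguments. Unset Strict Implicit. Unset Printing Implicit Defensive.
Import Order.TTheory GRing.Theory Num.Theory.
Local Open Scope ring_scope.
Local Open Scope classical_set_scope.

Definition vnorm2 (R : realType) (m : nat) (x : 'cV[R]_m) : R :=
  Num.sqrt (\sum_(i < m) x i 0 ^+ 2).

Definition specnorm (R : realType) (m n : nat) (A : 'M[R]_(m, n)) : R :=
  sup [set vnorm2 (A *m x) | x in [set x : 'cV[R]_n | vnorm2 x <= 1]].

Definition hadamard (R : ringType) (m n : nat) (A B : 'M[R]_(m, n)) : 'M[R]_(m, n) :=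
  \matrix_(i, j) (A i j * B i j).

From HB Require Import structures.
From mathcomp Require Import all_boot all_order all_algebra.
From mathcomp Require Import all_classical all_reals.
From mathcomp Require Import ring lra zify.
Import Order.TTheory GRing.Theory Num.Theory.
Local Open Scope ring_scope.

Set Implicit Arguments.
Unset Strict Implicit.
Unset Printing Implicit Defensive.

(* Put g = lam_r - lam_(r+1).  Removing the diagonal part of the Sylvester
   equation gives  W_O - Theta_0 o H_O = Theta_0 o (H_S W_O - W_O H_X).  The
   entries of Theta_0 are at most 1/g, so by way of the Frobenius norm the Hadamard
   product with Theta_0 has spectral norm at most c = sqrt r / g.  Hence the error
   e satisfies  e <= c (|H_X| + |H_S|) |W_O|  and  |W_O| <= c |H_O| + e.  The
   smallness hypothesis makes the factor c (|H_X| + |H_S|) at most 1/2, so e can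
   be absorbed: e <= 2 r |H_O| (|H_X| + |H_S|) / g^2, and r <= n d. *)

Lemma sum_mul_sqr_le (R : realDomainType) (k : nat) (a b : 'I_k -> R) :
  (\sum_i a i * b i) ^+ 2 <= (\sum_i a i ^+ 2) * (\sum_i b i ^+ 2).
Proof.
have lagrange_ge0 : 0 <= \sum_i \sum_j (a i * b j - a j * b i) ^+ 2.
  by do 2!(apply: sumr_ge0 => ? _); exact: sqr_ge0.
have expand : \sum_i \sum_j (a i * b j - a j * b i) ^+ 2 =
   \sum_i \sum_j a i ^+ 2 * b j ^+ 2 + \sum_i \sum_j a j ^+ 2 * b i ^+ 2
   - (\sum_i \sum_j (a i * b i) * (a j * b j)) *+ 2.
  rewrite -sumrMnl -big_split -sumrB /=; apply: eq_bigr => i _.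
  rewrite -sumrMnl -big_split -sumrB /=; apply: eq_bigr => j _.
  rewrite -mulr_natr; ring.
have prod_sqr : \sum_i \sum_j a i ^+ 2 * b j ^+ 2 =
    (\sum_i a i ^+ 2) * (\sum_i b i ^+ 2).
  by rewrite big_distrl; apply: eq_bigr => i _; rewrite big_distrr.
have sqr_sum : \sum_i \sum_j (a i * b i) * (a j * b j) = (\sum_i a i * b i) ^+ 2.
  by rewrite expr2 big_distrl; apply: eq_bigr => i _; rewrite big_distrr.
move: lagrange_ge0; rewrite expand prod_sqr exchange_big prod_sqr sqr_sum.
rewrite -mulr_natr; lra.
Qed.

Lemma absorption_le (R : realDomainType) (e w c k : R) :
  0 <= e -> 0 <= k -> 2 * k <= 1 -> e <= k * w -> w <= c + e -> e <= 2 * k * c.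
Proof. by move=> *; nra. Qed.

Section SpectralNorm.
Variable R : realType.
Implicit Types m n p : nat.

Definition sqnorm n (x : 'cV[R]_n) : R := \sum_i x i 0 ^+ 2.

Definition frobsq m n (A : 'M[R]_(m, n)) : R := \sum_i \sum_j A i j ^+ 2.

Lemma sqnorm_ge0 n (x : 'cV[R]_n) : 0 <= sqnorm x.
Proof. by apply: sumr_ge0 => i _; exact: sqr_ge0. Qed.

Lemma frobsq_ge0 m n (A : 'M[R]_(m, n)) : 0 <= frobsq A.
Proof. by do 2!(apply: sumr_ge0 => ? _); exact: sqr_ge0. Qed.

Lemma vnorm2_ge0 n (x : 'cV[R]_n) : 0 <= vnorm2 x.
Proof. exact: sqrtr_ge0. Qed.

Lemma sqr_vnorm2 n (x : 'cV[R]_n) : vnorm2 x ^+ 2 = sqnorm x.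
Proof. by rewrite sqr_sqrtr // sqnorm_ge0. Qed.

Lemma vnorm2_le n (x : 'cV[R]_n) K : 0 <= K -> sqnorm x <= K ^+ 2 -> vnorm2 x <= K.
Proof. by move=> K0 le_xK; rewrite -(ger0_norm K0) -sqrtr_sqr ler_sqrt // sqr_ge0. Qed.

Lemma sqnorm_le1 n (x : 'cV[R]_n) : vnorm2 x <= 1 -> sqnorm x <= 1.
Proof.
by move=> x_le1; rewrite -sqr_vnorm2 -(expr1n _ 2) ler_pXn2r ?nnegrE ?vnorm2_ge0.
Qed.

Lemma vnorm2_eq0 n (x : 'cV[R]_n) : vnorm2 x = 0 -> x = 0.
Proof.
move=> /(congr1 (fun t => t ^+ 2)); rewrite sqr_vnorm2 expr0n => /eqP.
rewrite psumr_eq0 => [/allP x0|i _]; last exact: sqr_ge0.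
apply/matrixP => i j; rewrite (ord1 j) mxE.
by have /= := x0 i (mem_index_enum _); rewrite sqrf_eq0 => /eqP.
Qed.

Lemma vnorm2_0 n : vnorm2 (0 : 'cV[R]_n) = 0.
Proof. by rewrite /vnorm2 big1 ?sqrtr0 // => i _; rewrite mxE expr0n. Qed.

Lemma vnorm2N n (x : 'cV[R]_n) : vnorm2 (- x) = vnorm2 x.
Proof. by congr Num.sqrt; apply: eq_bigr => i _; rewrite mxE sqrrN. Qed.

Lemma vnorm2Z n (a : R) (x : 'cV[R]_n) : vnorm2 (a *: x) = `|a| * vnorm2 x.
Proof.
rewrite -sqrtr_sqr -sqrtrM ?sqr_ge0 // big_distrr /=.
by congr Num.sqrt; apply: eq_bigr => i _; rewrite mxE exprMn.
Qed.

Lemma vnorm2D n (x y : 'cV[R]_n) : vnorm2 (x + y) <= vnorm2 x + vnorm2 y.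
Proof.
apply: vnorm2_le; first by rewrite addr_ge0 ?vnorm2_ge0.
have -> : sqnorm (x + y) = sqnorm x + sqnorm y + (\sum_i x i 0 * y i 0) *+ 2.
  rewrite /sqnorm -sumrMnl -!big_split /=; apply: eq_bigr => i _.
  by rewrite !mxE -mulr_natr; ring.
have cross_le : \sum_i x i 0 * y i 0 <= vnorm2 x * vnorm2 y.
  apply: le_trans (ler_norm _) _.
  rewrite -sqrtr_sqr -sqrtrM ?sqnorm_ge0 // ler_sqrt ?mulr_ge0 ?sqnorm_ge0 //.
  exact: sum_mul_sqr_le.
by rewrite -!sqr_vnorm2 -mulr_natr; nra.
Qed.

Lemma vnorm2_delta n (j : 'I_n) : vnorm2 (delta_mx j 0 : 'cV[R]_n) = 1.
Proof.
rewrite /vnorm2 (bigD1 j) //= big1 => [|i /negbTE ij]; last by rewrite mxE ij expr0n.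
by rewrite mxE !eqxx expr1n addr0 sqrtr1.
Qed.

Lemma sqnorm_mulmx_le m n (A : 'M[R]_(m, n)) x : sqnorm (A *m x) <= frobsq A * sqnorm x.
Proof.
rewrite /sqnorm /frobsq big_distrl; apply: ler_sum => i _.
rewrite mxE; exact: (sum_mul_sqr_le (fun j => A i j) (fun j => x j 0)).
Qed.

Let ball_image m n (A : 'M[R]_(m, n)) :=
  [set vnorm2 (A *m x) | x in [set x : 'cV[R]_n | vnorm2 x <= 1]]%classic.

Let ball_image_bounded m n (A : 'M[R]_(m, n)) : has_ubound (ball_image A).
Proof.
exists (Num.sqrt (frobsq A)) => _ [x /= /sqnorm_le1 x_le1 <-].
apply: vnorm2_le; first exact: sqrtr_ge0.
rewrite sqr_sqrtr ?frobsq_ge0 //; apply: le_trans (sqnorm_mulmx_le A x) _.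
by rewrite ler_piMr ?frobsq_ge0.
Qed.

Lemma vnorm2_mulmx_le1 m n (A : 'M[R]_(m, n)) x :
  vnorm2 x <= 1 -> vnorm2 (A *m x) <= specnorm A.
Proof. by move=> x_le1; apply: (ub_le_sup (ball_image_bounded A)); exists x. Qed.

Lemma specnorm_ge0 m n (A : 'M[R]_(m, n)) : 0 <= specnorm A.
Proof.
by rewrite -(vnorm2_0 m) -(mulmx0 _ A) vnorm2_mulmx_le1 // vnorm2_0.
Qed.

Lemma specnorm_le m n (A : 'M[R]_(m, n)) K :
  (forall x, vnorm2 x <= 1 -> vnorm2 (A *m x) <= K) -> specnorm A <= K.
Proof.
move=> AK; apply: ge_sup => [|_ [x /= x_le1 <-]]; last exact: AK.
by exists (vnorm2 (A *m 0)), 0 => //=; rewrite vnorm2_0 ler01.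
Qed.

Lemma vnorm2_mulmx m n (A : 'M[R]_(m, n)) x :
  vnorm2 (A *m x) <= specnorm A * vnorm2 x.
Proof.
have [x0|xn0] := eqVneq (vnorm2 x) 0.
  by rewrite (vnorm2_eq0 x0) mulmx0 !vnorm2_0 mulr0.
have x_gt0 : 0 < vnorm2 x by rewrite lt_def xn0 vnorm2_ge0.
have := @vnorm2_mulmx_le1 _ _ A ((vnorm2 x)^-1 *: x).
rewrite -scalemxAr !vnorm2Z gtr0_norm ?invr_gt0 // mulVf // lexx => /(_ isT).
by rewrite -(ler_pM2r x_gt0) mulrAC mulVf // mul1r.
Qed.

Lemma specnormD m n (A B : 'M[R]_(m, n)) : specnorm (A + B) <= specnorm A + specnorm B.
Proof.
apply: specnorm_le => x x_le1; rewrite mulmxDl.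
by apply: le_trans (vnorm2D _ _) _; apply: lerD; exact: vnorm2_mulmx_le1.
Qed.

Lemma specnormN m n (A : 'M[R]_(m, n)) : specnorm (- A) <= specnorm A.
Proof. by apply: specnorm_le => x x_le1; rewrite mulNmx vnorm2N vnorm2_mulmx_le1. Qed.

Lemma specnormB m n (A B : 'M[R]_(m, n)) : specnorm (A - B) <= specnorm A + specnorm B.
Proof. by apply: le_trans (specnormD _ _) _; rewrite lerD2l specnormN. Qed.

Lemma specnorm_mulmx m n p (A : 'M[R]_(m, n)) (B : 'M[R]_(n, p)) :
  specnorm (A *m B) <= specnorm A * specnorm B.
Proof.
apply: specnorm_le => x x_le1; rewrite -mulmxA.
apply: le_trans (vnorm2_mulmx _ _) _.
by rewrite ler_wpM2l ?specnorm_ge0 ?vnorm2_mulmx_le1.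
Qed.

Lemma frobsq_le_specnorm m n (A : 'M[R]_(m, n)) : frobsq A <= n%:R * specnorm A ^+ 2.
Proof.
have -> : n%:R * specnorm A ^+ 2 = \sum_(j < n) specnorm A ^+ 2.
  by rewrite sumr_const card_ord mulr_natl.
rewrite /frobsq exchange_big; apply: ler_sum => j _.
have -> : \sum_i A i j ^+ 2 = vnorm2 (A *m delta_mx j 0) ^+ 2.
  by rewrite sqr_vnorm2 -colE; apply: eq_bigr => i _; rewrite mxE.
by rewrite ler_pXn2r ?nnegrE ?vnorm2_ge0 ?specnorm_ge0 ?vnorm2_mulmx_le1 ?vnorm2_delta.
Qed.

(* The factor sqrt n comes from comparing frobsq M with the spectral norm, column by column. *)
Lemma specnorm_hadamard_le m n (T M : 'M[R]_(m, n)) c :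
  0 <= c -> (forall i j, `|T i j| <= c) ->
  specnorm (hadamard T M) <= c * Num.sqrt n%:R * specnorm M.
Proof.
move=> c0 Tc; apply: specnorm_le => x /sqnorm_le1 x_le1.
apply: vnorm2_le; first by rewrite !mulr_ge0 ?sqrtr_ge0 ?specnorm_ge0.
apply: le_trans (sqnorm_mulmx_le _ _) _.
have frob_TM : frobsq (hadamard T M) <= c ^+ 2 * frobsq M.
  rewrite /frobsq big_distrr; apply: ler_sum => i _; rewrite big_distrr.
  apply: ler_sum => j _; rewrite mxE exprMn ler_wpM2r ?sqr_ge0 //.
  by rewrite -real_normK ?num_real // ler_pXn2r ?nnegrE.
rewrite !exprMn sqr_sqrtr ?ler0n // -mulrA.
apply: le_trans (ler_piMr (frobsq_ge0 _) x_le1) _.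
by apply: le_trans frob_TM _; rewrite ler_wpM2l ?sqr_ge0 ?frobsq_le_specnorm.
Qed.

Lemma hadamard_fixed_point_le m r (T W H : 'M[R]_(m, r)) (X : 'M[R]_r) (S : 'M[R]_m) u :
  0 <= u -> (forall i j, `|T i j| <= u) ->
  W - hadamard T H = hadamard T (S *m W - W *m X) ->
  2 * (u * Num.sqrt r%:R * (specnorm X + specnorm S)) <= 1 ->
  specnorm (W - hadamard T H) <=
    2 * r%:R * u ^+ 2 * specnorm H * (specnorm X + specnorm S).
Proof.
move=> u_ge0 Tu WT small.
set c := u * Num.sqrt r%:R; set h := specnorm X + specnorm S.
have c_ge0 : 0 <= c by rewrite mulr_ge0 ?sqrtr_ge0.
have h_ge0 : 0 <= h by rewrite addr_ge0 ?specnorm_ge0.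
have hadamard_le M : specnorm (hadamard T M) <= c * specnorm M.
  exact: specnorm_hadamard_le.
have err_le : specnorm (W - hadamard T H) <= c * h * specnorm W.
  rewrite WT -mulrA; apply: le_trans (hadamard_le _) _; rewrite ler_wpM2l //.
  apply: le_trans (specnormB _ _) _; rewrite mulrDl addrC.
  by apply: lerD; [rewrite mulrC|]; exact: specnorm_mulmx.
have W_le : specnorm W <= c * specnorm H + specnorm (W - hadamard T H).
  rewrite {1}(_ : W = hadamard T H + (W - hadamard T H)); last by rewrite addrC subrK.
  by apply: le_trans (specnormD _ _) _; rewrite lerD2r hadamard_le.
have -> : 2 * r%:R * u ^+ 2 * specnorm H * h = 2 * (c * h) * (c * specnorm H).
  by rewrite /c -[in LHS](@sqr_sqrtr _ r%:R) ?ler0n //; ring.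
exact: absorption_le (specnorm_ge0 _) (mulr_ge0 c_ge0 h_ge0) small err_le W_le.
Qed.

End SpectralNorm.

Lemma sylvester_diag_hadamard (F : fieldType) m r (a : 'I_r -> F) (b : 'I_m -> F)
    (X : 'M[F]_r) (S : 'M[F]_m) (W H : 'M[F]_(m, r)) :
  (forall i j, a j != b i) ->
  W *m (diag_mx (\row_j a j) + X) - (diag_mx (\row_i b i) + S) *m W = H ->
  W - hadamard (\matrix_(i, j) (a j - b i)^-1) H =
    hadamard (\matrix_(i, j) (a j - b i)^-1) (S *m W - W *m X).
Proof.
move=> ab <-; apply/matrixP => i j.
rewrite mulmxDr mulmxDl mul_mx_diag mul_diag_mx !mxE.
have ab_neq0 : a j - b i != 0 by rewrite subr_eq0.
by field.
Qed.

Lemma sorted_gap_le (R : numDomainType) n r (lam : nat -> R) :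
  (0 < r < n)%N ->
  (forall i j : nat, (1 <= i)%N -> (i <= j)%N -> (j <= n)%N -> lam j <= lam i) ->
  forall (i : 'I_(n - r)) (j : 'I_r), lam r - lam r.+1 <= lam j.+1 - lam (r + i).+1.
Proof.
move=> /andP[r_gt0 r_lt_n] sorted i j; apply: lerB; apply: sorted => //.
- exact: ltnW.
- by rewrite ltnS leq_addr.
- by have := ltn_ord i; lia.
Qed.

Lemma nat_le_mul_sqrt_minn (R : rcfType) n r :
  (0 < r < n)%N -> r%:R <= n%:R * Num.sqrt (minn r (n - r))%:R :> R.
Proof.
move=> /andP[r_gt0 r_lt_n].
have min_ge1 : 1 <= Num.sqrt (minn r (n - r))%:R :> R.
  by rewrite -[leLHS]sqrtr1 ler_sqrt // ler1n leq_min r_gt0 subn_gt0.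
rewrite -[leLHS]mulr1 ler_pM ?ler0n // ler_nat ltnW //.
Qed.

Lemma sqrt_nat_le (R : rcfType) r : Num.sqrt r%:R <= r%:R :> R.
Proof.
case: r => [|r]; first by rewrite sqrtr0.
rewrite -[leRHS]ger0_norm ?ler0n // -sqrtr_sqr ler_sqrt ?sqr_ge0 //.
by rewrite -[leLHS]mulr1 expr2 ler_pM ?ler0n // ler1n.
Qed.

Theorem lemma14 (R : realType) (n r : nat) (lam : nat -> R)
  (Hr : (0 < r < n)%N)
  (Hsorted : forall i j : nat, (1 <= i)%N -> (i <= j)%N -> (j <= n)%N -> lam j <= lam i)
  (Hpos : 0 < lam r) (Hneg : lam r.+1 < 0)
  (HX : 'M[R]_r) (HS : 'M[R]_(n - r)) (HO : 'M[R]_(n - r, r))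
  (HXsym : HX^T = HX) (HSsym : HS^T = HS)
  (Hsmall : specnorm HX + specnorm HS <=
     (lam r - lam r.+1) /
       (2 * n%:R * Num.sqrt (minn r (n - r))%:R))
  (WO : 'M[R]_(n - r, r))
  (HW : WO *m (diag_mx (\row_(j < r) lam j.+1) + HX)
        - (diag_mx (\row_(i < n - r) lam (r + i).+1) + HS) *m WO = HO) :
  specnorm (WO - hadamard (\matrix_(i < n - r, j < r) (lam j.+1 - lam (r + i).+1)^-1) HO)
  <= 2 * n%:R * Num.sqrt (minn r (n - r))%:R / (lam r - lam r.+1) ^+ 2
     * specnorm HO * (specnorm HX + specnorm HS).
Proof.
set g := lam r - lam r.+1; set d := Num.sqrt (minn r (n - r))%:R.
set Theta := \matrix_(i, j) _; set h := specnorm HX + specnorm HS.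
have g_gt0 : 0 < g by rewrite subr_gt0 (lt_trans Hneg).
have gap := sorted_gap_le Hr Hsorted.
have Theta_le i j : `|Theta i j| <= g^-1.
  have gap_gt0 := lt_le_trans g_gt0 (gap i j).
  by rewrite mxE normfV gtr0_norm // lef_pV2.
have r_le := nat_le_mul_sqrt_minn R Hr.
have small : 2 * (g^-1 * Num.sqrt r%:R * h) <= 1.
  have sqrt_r_le : Num.sqrt r%:R <= n%:R * d := le_trans (sqrt_nat_le _ _) r_le.
  have D_gt0 : 0 < 2 * n%:R * d.
    by rewrite -mulrA mulr_gt0 // (lt_le_trans _ r_le) // ltr0n; case/andP: Hr.
  move: Hsmall; rewrite -/h ler_pdivlMr // => Hsmall.
  rewrite (_ : 2 * _ = 2 * Num.sqrt r%:R * h / g); last by ring.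
  rewrite ler_pdivrMr // mul1r; apply: le_trans Hsmall.
  by rewrite [leRHS]mulrC ler_wpM2r ?addr_ge0 ?specnorm_ge0 // -mulrA ler_wpM2l.
have residual : WO - hadamard Theta HO = hadamard Theta (HS *m WO - WO *m HX).
  apply: sylvester_diag_hadamard HW => i j.
  by rewrite -subr_eq0 gt_eqF // (lt_le_trans g_gt0 (gap i j)).
apply: le_trans (hadamard_fixed_point_le _ Theta_le residual small) _.
  by rewrite invr_ge0 ltW.
rewrite exprVn -/h -!mulrA ler_wpM2l // [leRHS]mulrA ler_wpM2r //.
by rewrite mulr_ge0 ?invr_ge0 ?sqr_ge0 // mulr_ge0 ?addr_ge0 ?specnorm_ge0.
Qed.
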